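(* Let $\mathfrak S=(S,\xrightarrow{F},\leq)$ be an $\infty$-effective complete WSTS and let $s_0\in S$. The following statements are equivalent: (1) $(\mathfrak S,s_0)$ is clover-flattable; (2) $(\mathfrak S,s_0)$ is weakly clover-flattable; (3) $(\mathfrak S,s_0)$ is strongly clover-flattable; (4) the procedure $\mathbf{Clover}_{\mathfrak S}$ terminates on input $s_0$.
   Context: Order theory. For a poset $(S,\le)$ and $E\subseteq S$, $\downarrow E=\{y\mid \exists x\in E, y\le x\}$, $\uparrow E$ dually, $\operatorname{Max}E$ is the set of maximal elements of $E$. A directed subset is a nonempty $D$ in which any two elements have an upper bound in $D$; $(S,\le)$ is a dcpo if every directed $D$ has a least upper bound $\bigvee D$. For $E\subseteq S$, $\operatorname{Lub}(E)=\{\bigvee D\mid D\subseteq E \text{ directed}\}$. $x\ll y$ iff for every directed $D$ with $y\le\bigvee D$ there is $z\in D$ with $x\le z$; a dcpo is continuous if for every $x$, $\{y\mid y\ll x\}$ is directed with lub $x$. A set $U$ is Scott-open if it is upward-closed and every directed $D$ with $\bigvee D\in U$ meets $U$; closed sets are complements of open sets and $cl(A)$ is the smallest closed set containing $A$. A map between dcpos is continuous if it is monotone and preserves lubs of directed sets. A partial order is a wpo if it is well-founded and has no infinite antichain; a continuous dcwo is a wpo which is also a continuous dcpo. Transition systems. A functional transition system $(S,\xrightarrow{F})$ is given by a finite set $F$ of partial maps $S\rightharpoonup S$, with $s\to s'$ iff $s'=f(s)$ for some $f\in F$ with $s\in\operatorname{dom}f$. $Post(A)$ is the set of one-step successors of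 $A$, $Post^*$ its reflexive-transitive iterate; for an ordered system, $Cover_{\mathfrak S}(s)=\downarrow Post^*(\downarrow s)$. $F^*$ denotes the set of finite compositions of maps of $F$ (a word $g_1g_2$ denotes $g_2\circ g_1$). A partial map $f$ on a dcpo is partial continuous if $\operatorname{dom}f$ is Scott-open and $f(\bigvee D)=\bigvee f(D)$ for every directed $D\subseteq \operatorname{dom}f$. A complete transition system is a functional transition system $(S,\xrightarrow{F},\le)$ where $(S,\le)$ is a continuous dcwo and every $f\in F$ is partial continuous; a complete WSTS is such a system (it is then a WSTS: well-ordered and monotonic). Lub-acceleration: for partial continuous $g$, $g^\infty$ has domain $\operatorname{dom}g$, and $g^\infty(x)=\bigvee_{n\in\mathbb N} g^n(x)$ if $x<g(x)$, $g^\infty(x)=g(x)$ otherwise. The system is $\infty$-effective if it is effective (states are finitely coded, $\le$ is decidable, for each $f\in F$ membership in $\operatorname{dom} f$ is decidable and $f$ is computable) and $g^\infty$ is computable for every $g\in F^*$. Procedure $\mathbf{Clover}_{\mathfrak S}(s_0)$: 1. $A\leftarrow\{s_0\}$; 2. while $Post(A)\not\le^\flat A$ do: (a) choose fairly $(g,a)\in F^*\times A$ with $a\in\operatorname{dom}g$; (b) $A\leftarrow A\cup\{g^\infty(a)\}$; 3. return $\operatorname{Max}A$. Here $B\le^\flat C$ iff $\downarrow B\subseteq\downarrow C$. Writing $A_m$ for the value of $A$ after $m$ iterations, the choice is fair if on every infinite execution every pair $(g,a)\in F^*\times A_m$ with $a\in\operatorname{dom} g$ is picked at some later stage. Flattening.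 A functional transition system is flat if there are finitely many words $w_1,\dots,w_k\in F^*$ such that every sequence of transitions fireable (from the initial state under consideration) lies in the language $w_1^*w_2^*\cdots w_k^*$. A morphism $\varphi:(S_1,\xrightarrow{F_1})\to(S_2,\xrightarrow{F_2})$ is a pair of maps $S_1\to S_2$, $F_1\to F_2$ (both written $\varphi$) such that whenever $s\in\operatorname{dom}f_1$ and $s'=f_1(s)$ then $\varphi(s)\in\operatorname{dom}\varphi(f_1)$ and $\varphi(s')=\varphi(f_1)(\varphi(s))$. A continuous flattening of a complete transition system $\mathfrak S_2$ is a pair $(\mathfrak S_1,\varphi)$ where $\mathfrak S_1$ is a flat complete transition system and $\varphi$ is a morphism whose state map is Scott-continuous. $(\mathfrak S,s_0)$ is clover-flattable iff there are a continuous flattening $(\mathfrak S_1,\varphi)$ of $\mathfrak S$ and a state $s_1$ of $\mathfrak S_1$ (flat from $s_1$) with $\varphi(s_1)=s_0$ and $cl(Cover_{\mathfrak S}(s_0))=cl(\varphi\langle cl(Cover_{\mathfrak S_1}(s_1))\rangle)$; it is weakly clover-flattable if instead $\varphi(s_1)\le s_0$ and $cl(Cover_{\mathfrak S}(s_0))\subseteq cl(\varphi\langle cl(Cover_{\mathfrak S_1}(s_1))\rangle)$. An rl-automaton over alphabet $F$ is a deterministic finite automaton $\mathcal A=(F,Q,\delta,q_0)$ with partial transition function $\delta$ and all states final, recognizing a language of the form $\operatorname{Pfx}(w_1^*\cdots w_k^* )$ (prefixes of words of $w_1^*\cdots w_k^*$, $w_i\in F^*$). The synchronized product $\mathfrak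 S\times\mathcal A$ has states $S\times Q$, order $(s,q)\le(s',q')$ iff $s\le s'$ and $q=q'$, and maps $f\bowtie\delta:(s,q)\mapsto(f(s),\delta(q,f))$ (defined when $s\in\operatorname{dom}f$ and $\delta(q,f)$ is defined), for each $f\in F$ such that $\delta(q,f)$ is defined for some $q$; $\pi_1(s,q)=s$. $(\mathfrak S,s_0)$ is strongly clover-flattable iff there is an rl-automaton $\mathcal A$ with initial state $q_0$ such that $cl(Cover_{\mathfrak S}(s_0))=cl(\pi_1\langle cl(Cover_{\mathfrak S\times\mathcal A}(s_0,q_0))\rangle)$. *)

From mathcomp Require Import all_boot.
Set Implicit Arguments. Unset Strict Implicit. Unset Printing Implicit Defensive.

Section Order.
Variables (S : Type) (le : S -> S -> Prop).

Definition partial_order : Prop :=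
  (forall x, le x x) /\ (forall x y, le x y -> le y x -> x = y) /\
  (forall x y z, le x y -> le y z -> le x z).

Definition lt (x y : S) : Prop := le x y /\ x <> y.

Definition directed (D : S -> Prop) : Prop :=
  (exists x, D x) /\
  forall x y, D x -> D y -> exists z, D z /\ le x z /\ le y z.

Definition is_lub (D : S -> Prop) (l : S) : Prop :=
  (forall y, D y -> le y l) /\ (forall u, (forall y, D y -> le y u) -> le l u).

Definition dcpo : Prop := forall D, directed D -> exists l, is_lub D l.

Definition way_below (x y : S) : Prop :=
  forall D l, directed D -> is_lub D l -> le y l -> exists z, D z /\ le x z.

Definition continuous_dcpo : Prop :=
  dcpo /\ forall x, directed (fun y => way_below y x) /\
                    is_lub (fun y => way_below y x) x.

Definition wpo : Prop :=
  well_founded lt /\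
  ~ (exists a : nat -> S, forall i j, i <> j -> ~ le (a i) (a j)).

Definition down (A : S -> Prop) (x : S) : Prop := exists y, A y /\ le x y.

Definition upward_closed (U : S -> Prop) : Prop :=
  forall x y, U x -> le x y -> U y.

Definition scott_open (U : S -> Prop) : Prop :=
  upward_closed U /\
  forall D l, directed D -> is_lub D l -> U l -> exists d, D d /\ U d.

Definition scott_closed (C : S -> Prop) : Prop := scott_open (fun x => ~ C x).

Definition cl (A : S -> Prop) (x : S) : Prop :=
  forall C, scott_closed C -> (forall y, A y -> C y) -> C x.

Definition dom (f : S -> option S) (x : S) : Prop := f x <> None.

Definition partial_continuous (f : S -> option S) : Prop :=
  scott_open (dom f) /\
  forall D l, directed D -> (forall d, D d -> dom f d) -> is_lub D l ->
    exists y, f l = Some y /\ is_lub (fun z => exists d, D d /\ f d = Some z) y.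

End Order.

Definition image (A B : Type) (h : A -> B) (X : A -> Prop) (y : B) : Prop :=
  exists x, X x /\ h x = y.

Definition scott_continuous (S1 S2 : Type) (le1 : S1 -> S1 -> Prop)
    (le2 : S2 -> S2 -> Prop) (h : S1 -> S2) : Prop :=
  (forall x y, le1 x y -> le2 (h x) (h y)) /\
  (forall D l, directed le1 D -> is_lub le1 D l -> is_lub le2 (image h D) (h l)).

Definition set_eq (A : Type) (X Y : A -> Prop) : Prop := forall x, X x <-> Y x.
Definition subset (A : Type) (X Y : A -> Prop) : Prop := forall x, X x -> Y x.

Fixpoint in_lang (L : Type) (ws : seq (seq L)) (u : seq L) : Prop :=
  match ws with
  | [::] => u = [::]
  | w :: ws' => exists n u2, u = flatten (nseq n w) ++ u2 /\ in_lang ws' u2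
  end.

Record TS := MkTS {
  st : Type;
  le : st -> st -> Prop;
  lab : finType;
  act : lab -> st -> option st }.

Section TSdefs.
Variable T : TS.

(** a word g1 g2 ... gn denotes gn o ... o g1 *)
Fixpoint run (w : seq (lab T)) (s : st T) : option (st T) :=
  match w with
  | [::] => Some s
  | f :: w' => match act f s with Some s' => run w' s' | None => None end
  end.

Fixpoint iterp (g : st T -> option (st T)) (n : nat) (x : st T) : option (st T) :=
  match n with
  | 0 => Some x
  | n'.+1 => match iterp g n' x with Some y => g y | None => None end
  end.

Definition complete_ts : Prop :=
  partial_order (@le T) /\ continuous_dcpo (@le T) /\ wpo (@le T) /\
  forall f, partial_continuous (@le T) (act f).

Definition post (A : st T -> Prop) (s' : st T) : Prop :=
  exists a f, A a /\ act f a = Some s'.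

Definition reach (s s' : st T) : Prop := exists w, run w s = Some s'.

Definition cover (s : st T) (x : st T) : Prop :=
  exists y z, le y s /\ reach y z /\ le x z.

Definition accel (w : seq (lab T)) (x y : st T) : Prop :=
  exists gx, run w x = Some gx /\
   ((lt (@le T) x gx /\
       is_lub (@le T) (fun z => exists n, iterp (run w) n x = Some z) y) \/
    (~ lt (@le T) x gx /\ y = gx)).

(** infinity-effectiveness: finite coding of states, decidable order,
    decidable domains (the maps [act f] themselves are Rocq functions),
    and a function computing g^oo for every g in F^*. *)
Definition infty_effective : Prop :=
  (exists code : st T -> nat, injective code) /\
  (exists leb : st T -> st T -> bool, forall x y, le x y <-> leb x y = true) /\
  (forall f, exists domb : st T -> bool, forall x, dom (act f) x <-> domb x = true) /\
  (exists acc : seq (lab T) -> st T -> st T,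
      forall w x, dom (run w) x -> accel w x (acc w x)).

(** The procedure Clover. An execution is given by the chosen pairs
    (w m, a m) and the added elements b m = (w m)^oo (a m);
    A_m = {s0} U {b k | k < m}. *)
Definition clover_set (s0 : st T) (b : nat -> st T) (m : nat) (x : st T) : Prop :=
  x = s0 \/ exists k, (k < m)%N /\ x = b k.

Definition clover_stop (A : st T -> Prop) : Prop :=
  subset (down (@le T) (post A)) (down (@le T) A).

Definition clover_fair_infinite_run (s0 : st T)
    (w : nat -> seq (lab T)) (a b : nat -> st T) : Prop :=
  (forall m, ~ clover_stop (clover_set s0 b m) /\
             clover_set s0 b m (a m) /\ accel (w m) (a m) (b m)) /\
  (forall m g x, clover_set s0 b m x -> dom (run g) x ->
      exists m', (m <= m')%N /\ w m' = g /\ a m' = x).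

Definition clover_terminates (s0 : st T) : Prop :=
  ~ exists w a b, clover_fair_infinite_run s0 w a b.

Definition flat_from (s : st T) : Prop :=
  exists ws : seq (seq (lab T)), forall u, run u s <> None -> in_lang ws u.

End TSdefs.

Definition ts_morphism (T1 T2 : TS) (hs : st T1 -> st T2) (hl : lab T1 -> lab T2) : Prop :=
  forall f s s', act f s = Some s' -> act (hl f) (hs s) = Some (hs s').

Definition clover_flattable (T : TS) (s0 : st T) : Prop :=
  exists (T1 : TS) (hs : st T1 -> st T) (hl : lab T1 -> lab T) (s1 : st T1),
    complete_ts T1 /\ flat_from s1 /\ ts_morphism hs hl /\
    scott_continuous (@le T1) (@le T) hs /\ hs s1 = s0 /\
    set_eq (cl (@le T) (cover s0))
           (cl (@le T) (image hs (cl (@le T1) (cover s1)))).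

Definition weakly_clover_flattable (T : TS) (s0 : st T) : Prop :=
  exists (T1 : TS) (hs : st T1 -> st T) (hl : lab T1 -> lab T) (s1 : st T1),
    complete_ts T1 /\ flat_from s1 /\ ts_morphism hs hl /\
    scott_continuous (@le T1) (@le T) hs /\ le (hs s1) s0 /\
    subset (cl (@le T) (cover s0))
           (cl (@le T) (image hs (cl (@le T1) (cover s1)))).

Section Automata.
Variables (L : finType) (Q : finType) (delta : Q -> L -> option Q).

Fixpoint drun (u : seq L) (q : Q) : option Q :=
  match u with
  | [::] => Some q
  | f :: u' => match delta q f with Some q' => drun u' q' | None => None end
  end.

(** recognized language (all states final) is Pfx(w1^* ... wk^* ) *)
Definition rl_automaton (q0 : Q) : Prop :=
  exists ws : seq (seq L),
    forall u, drun u q0 <> None <-> exists v, in_lang ws (u ++ v).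

Definition prod_lab : predArgType :=
  {f : L | [exists q, delta q f != None]}.
End Automata.

Definition sync_product (T : TS) (Q : finType) (delta : Q -> lab T -> option Q) : TS :=
  @MkTS (st T * Q)
    (fun p p' => le p.1 p'.1 /\ p.2 = p'.2)
    (prod_lab delta)
    (fun f p => match act (val f) p.1, delta p.2 (val f) with
                | Some s', Some q' => Some (s', q')
                | _, _ => None end).

Definition strongly_clover_flattable (T : TS) (s0 : st T) : Prop :=
  exists (Q : finType) (delta : Q -> lab T -> option Q) (q0 : Q),
    rl_automaton delta q0 /\
    set_eq (cl (@le T) (cover s0))
      (cl (@le T) (image (fun p : st T * Q => p.1)
          (cl (@le (sync_product delta)) (@cover (sync_product delta) (s0, q0))))).

(* (1) => (2) is immediate and (3) => (1) takes the product of S with the rl-automaton as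
   flattening, with the first projection as morphism.

   (2) => (4): along an infinite fair run of Clover, every sequence of iterates g^n(x)
   starting in a Clover set A_m stays below a single A_M.  Either some iterate in the Clover
   sets has a nondecreasing g-step, and fairness adds its lub-acceleration (or a fixpoint),
   or every step stays inside the Clover sets and the wpo gives x_i <= x_j, so g^(j-i) is
   nondecreasing from x_i on.  Flatness of S1 then bounds the image of Cover(s1) below one
   A_M; since the down-closure of a finite set is Scott closed, weak flattening gives
   cl(Cover(s0)) below A_M, so the loop test holds at M, a contradiction.

   (4) => (3): running Clover with a fair schedule built from the computable
   accelerations, termination yields A_M whose down-closure is post-closed, hence contains
   Cover(s0).  Each element of A_M arises from s0 by accelerations along words g1, ..., gk;
   the automaton recognizing the prefixes of g1^* ... gk^* follows these accelerations in the
   product, because some automaton state recurs infinitely often along each iteration. *)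

From Pilot Require Import Defs.
From mathcomp Require Import all_boot.
From Stdlib Require Import Classical ClassicalEpsilon Wellfounded.
(* Restore [Defs.image], shadowed by [fintype.image]. *)
Import Defs.
Set Implicit Arguments. Unset Strict Implicit. Unset Printing Implicit Defensive.

Section PartialOrder.
Variables (S : Type) (le : S -> S -> Prop).
Hypothesis le_po : partial_order le.

Lemma po_refl x : le x x. Proof. by case: le_po. Qed.

Lemma po_trans x y z : le x y -> le y z -> le x z.
Proof. by case: le_po => _ [_ H]; apply: H. Qed.

Lemma po_anti x y : le x y -> le y x -> x = y.
Proof. by case: le_po => _ [H _]; apply: H. Qed.

Lemma le_lt_eq x y : le x y -> ~ lt le x y -> x = y.
Proof. by move=> hle hn; apply: NNPP => hne; apply: hn. Qed.

Definition pair_set (x y : S) (z : S) : Prop := z = x \/ z = y.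

Lemma directed_pair x y : le x y -> directed le (pair_set x y).
Proof.
move=> hxy; split; first by exists x; left.
move=> a c ha hc; exists y; split; first by right.
by case: ha => ->; case: hc => ->; split => //; apply: po_refl.
Qed.

Lemma is_lub_pair x y : le x y -> is_lub le (pair_set x y) y.
Proof.
move=> hxy; split; first by move=> z [->|->] //; apply: po_refl.
by move=> u hu; apply: hu; right.
Qed.

Lemma is_lub_ub D l d : is_lub le D l -> D d -> le d l.
Proof. by case=> H _; apply: H. Qed.

Lemma partial_continuous_mono f x y fx : partial_continuous le f -> le x y ->
  f x = Some fx -> exists fy, f y = Some fy /\ le fx fy.
Proof.
move=> [[hup _] hc] hxy hx.
have dy : dom f y by apply: (hup x) => //; rewrite /dom hx.
case: (hc (pair_set x y) y (directed_pair hxy)).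
- by move=> d [->|->] //; rewrite /dom hx.
- exact: is_lub_pair.
move=> fy [hfy hl]; exists fy; split => //.
by apply: (is_lub_ub hl); exists x; split => //; left.
Qed.

Lemma scott_closed_down C x y : scott_closed le C -> C y -> le x y -> C x.
Proof. by move=> [hup _] hy hxy; apply: NNPP => hx; exact: (hup x y hx hxy hy). Qed.

Lemma scott_closed_lub C D l : scott_closed le C -> directed le D -> is_lub le D l ->
  (forall d, D d -> C d) -> C l.
Proof.
move=> [_ ho] hD hl hC; apply: NNPP => hnl.
by case: (ho D l hD hl hnl) => d [hd hnd]; apply: hnd; apply: hC.
Qed.

Lemma subset_cl (A : S -> Prop) x : A x -> cl le A x.
Proof. by move=> hx C _ HC; apply: HC. Qed.

Lemma cl_least (A C : S -> Prop) x : scott_closed le C -> (forall y, A y -> C y) ->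
  cl le A x -> C x.
Proof. by move=> hC hAC hx; apply: hx. Qed.

Lemma scott_closed_cl (A : S -> Prop) : scott_closed le (cl le A).
Proof.
split.
- move=> x y hx hxy hy; apply: hx => C hC hAC.
  exact: (scott_closed_down hC (hy C hC hAC) hxy).
- move=> D l hD hl hnl; apply: NNPP => hno; apply: hnl => C hC hAC.
  apply: (scott_closed_lub hC hD hl) => d hd.
  have : cl le A d by apply: NNPP => hn; apply: hno; exists d.
  by apply.
Qed.

Definition above (D : S -> Prop) (d0 : S) (e : S) : Prop := D e /\ le d0 e.

Lemma directed_above D d0 : directed le D -> D d0 -> directed le (above D d0).
Proof.
move=> [_ hD] hd0; split; first by exists d0; split => //; apply: po_refl.
move=> x y [hx hx0] [hy hy0].
case: (hD x y hx hy) => z [hz [hxz hyz]].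
by exists z; split; [split => //; apply: po_trans hxz|].
Qed.

Lemma is_lub_above D d0 l : directed le D -> D d0 -> is_lub le D l ->
  is_lub le (above D d0) l.
Proof.
move=> [_ hD] hd0 [hub hleast]; split; first by move=> y [hy _]; apply: hub.
move=> u hu; apply: hleast => d hd.
case: (hD d d0 hd hd0) => z [hz [hdz hd0z]].
by apply: po_trans hdz _; apply: hu.
Qed.

Definition pimage (f : S -> option S) (D : S -> Prop) (z : S) : Prop :=
  exists d, D d /\ f d = Some z.

Lemma directed_pimage f D : partial_continuous le f -> directed le D ->
  (forall d, D d -> dom f d) -> directed le (pimage f D).
Proof.
move=> hf [[d hd] hD] hdom; split.
  by case E: (f d) => [z|]; [exists z, d | by case: (hdom d hd)].
move=> x y [dx [hdx hfx]] [dy [hdy hfy]].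
case: (hD dx dy hdx hdy) => z [hz [h1 h2]].
case: (partial_continuous_mono hf h1 hfx) => z1 [hz1 hle1].
case: (partial_continuous_mono hf h2 hfy) => z2 [hz2 hle2].
rewrite hz1 in hz2; case: hz2 => ?; subst z2.
by exists z1; split => //; exists z.
Qed.

Lemma scott_closed_preimage_partial f C : partial_continuous le f ->
  scott_closed le C -> scott_closed le (fun x => forall y, f x = Some y -> C y).
Proof.
move=> hf hC; split.
  move=> x x' hx hxx' hx'; apply: hx => y hy.
  case: (partial_continuous_mono hf hxx' hy) => y' [hy' hle].
  exact: (scott_closed_down hC (hx' y' hy') hle).
move=> D l hD hl hnl.
have [y [hly hny]] : exists y, f l = Some y /\ ~ C y.
  apply: NNPP => hn; apply: hnl => y hy; apply: NNPP => hc; apply: hn; by exists y.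
have hf' := hf; case: hf' => [[hup ho] hcont].
case: (ho D l hD hl) => [|d0 [hd0 hdd0]]; first by rewrite /dom hly.
have hdom : forall e, above D d0 e -> dom f e by move=> e [he he0]; apply: (hup d0).
case: (hcont _ _ (directed_above hD hd0) hdom (is_lub_above hD hd0 hl)) => y' [hy' hly'].
rewrite hly in hy'; case: hy' => <- in hly'.
case: hC => _ hCo.
case: (hCo _ _ (directed_pimage hf (directed_above hD hd0) hdom) hly' hny).
move=> z [[e [[he _] hfe]] hnz].
by exists e; split => // hall; apply: hnz; apply: hall.
Qed.

End PartialOrder.

Section ScottContinuous.
Variables (S1 S2 : Type) (le1 : S1 -> S1 -> Prop) (le2 : S2 -> S2 -> Prop).

Lemma directed_image h D : (forall x y, le1 x y -> le2 (h x) (h y)) ->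
  directed le1 D -> directed le2 (image h D).
Proof.
move=> hm [[d hd] hD]; split; first by exists (h d), d.
move=> x y [dx [hdx <-]] [dy [hdy <-]].
case: (hD dx dy hdx hdy) => z [hz [h1 h2]].
by exists (h z); split; [exists z|split; apply: hm].
Qed.

Lemma scott_closed_preimage h C : scott_continuous le1 le2 h ->
  scott_closed le2 C -> scott_closed le1 (fun x => C (h x)).
Proof.
move=> [hm hl] [hup hCo]; split.
  by move=> x y hx hxy hy; apply: (hup _ _ hx (hm _ _ hxy)).
move=> D l hD hlD hnl.
case: (hCo _ _ (directed_image hm hD) (hl D l hD hlD) hnl) => z [[d [hd <-]] hn].
by exists d.
Qed.

End ScottContinuous.

Notation wpow w n := (flatten (nseq n w)).

Lemma wpow_add (L : Type) (w : seq L) n k : wpow w (n + k) = wpow w n ++ wpow w k.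
Proof. by elim: n => //= n IH; rewrite IH catA. Qed.

Lemma wpow_mul (L : Type) (w : seq L) p q : wpow w (p * q) = wpow (wpow w p) q.
Proof. by elim: q => [|q IH]; rewrite ?muln0 //= mulnS wpow_add IH. Qed.

Lemma map_wpow (A B : Type) (h : A -> B) (w : seq A) n :
  map h (wpow w n) = wpow (map h w) n.
Proof. by elim: n => //= n IH; rewrite map_cat IH. Qed.

Section Runs.
Variable T : TS.

Lemma run_cat (u v : seq (lab T)) x :
  run (u ++ v) x = if run u x is Some y then run v y else None.
Proof. by elim: u x => [|f u IH] x //=; case: (act f x). Qed.

Lemma run_wpow_add (w : seq (lab T)) n k x :
  run (wpow w (n + k)) x = if run (wpow w n) x is Some y then run (wpow w k) y else None.
Proof. by rewrite wpow_add run_cat. Qed.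

Lemma run_wpowS (w : seq (lab T)) n x :
  run (wpow w n.+1) x = if run (wpow w n) x is Some y then run w y else None.
Proof. by rewrite -addn1 run_wpow_add /= cats0. Qed.

Lemma iterp_run (w : seq (lab T)) n x : iterp (run w) n x = run (wpow w n) x.
Proof. by elim: n => //= n ->; rewrite run_wpowS. Qed.

Lemma run_wpow_fixpoint (h : seq (lab T)) y n : run h y = Some y -> run (wpow h n) y = Some y.
Proof. by move=> hy; elim: n => //= n IH; rewrite run_wpowS IH. Qed.

Definition post_closed (X : st T -> Prop) : Prop :=
  forall f x y, X x -> act f x = Some y -> X y.

Lemma post_closed_run X u x y : post_closed X -> X x -> run u x = Some y -> X y.
Proof.
move=> hX; elim: u x => [|f u IH] x /=; first by move=> hx [<-].
by case E: (act f x) => [z|] // hx; apply: IH; apply: hX E.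
Qed.

Lemma run_morphism (T2 : TS) (hs : st T -> st T2) hl u x y : ts_morphism hs hl ->
  run u x = Some y -> run (map hl u) (hs x) = Some (hs y).
Proof.
move=> hmor; elim: u x => [|f u IH] x /=; first by case=> ->.
by case E: (act f x) => [x'|] // hr; rewrite (hmor _ _ _ E); apply: IH.
Qed.

Hypothesis le_po : partial_order (@le T).
Hypothesis act_pc : forall f, partial_continuous (@le T) (act f).

Lemma run_mono u (x y x' : st T) : le x y -> run u x = Some x' ->
  exists y', run u y = Some y' /\ le x' y'.
Proof.
elim: u x y => [|f u IH] x y /=; first by move=> h [<-]; exists y.
move=> hxy; case E: (act f x) => [x1|] // hr.
case: (partial_continuous_mono le_po (act_pc f) hxy E) => y1 [-> h1].
exact: IH h1 hr.
Qed.

Section IncreasingIterates.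
Variables (w : seq (lab T)) (x gx : st T).
Hypotheses (hgx : run w x = Some gx) (hxgx : le x gx).

Lemma run_wpow_step n : exists z z',
  run (wpow w n) x = Some z /\ run (wpow w n.+1) x = Some z' /\ le z z'.
Proof.
elim: n => [|n [z [z' [hz [hz' hle]]]]]; first by exists x, gx; rewrite /= cats0.
have hwz : run w z = Some z' by move: hz'; rewrite run_wpowS hz.
case: (run_mono hle hwz) => z'' [hz'' hle'].
by exists z', z''; rewrite [run (wpow w n.+2) x]run_wpowS hz'.
Qed.

Lemma run_wpow_chain n k z z' : run (wpow w n) x = Some z ->
  run (wpow w (n + k)) x = Some z' -> le z z'.
Proof.
elim: k z' => [|k IH] z' hz; first by rewrite addn0 hz => -[<-]; apply: po_refl.
case: (run_wpow_step (n + k)) => y [y' [hy [hy' hle]]].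
by rewrite addnS hy' => -[<-]; apply: po_trans (IH _ hz hy) hle.
Qed.

Lemma run_wpow_le n m z z' : n <= m -> run (wpow w n) x = Some z ->
  run (wpow w m) x = Some z' -> le z z'.
Proof. by move=> hnm hz; rewrite -(subnKC hnm); apply: run_wpow_chain. Qed.

Definition orbit (z : st T) : Prop := exists n, run (wpow w n) x = Some z.

Lemma directed_orbit : directed (@le T) orbit.
Proof.
split; first by exists x, 0.
move=> a c [n ha] [m hc].
case: (run_wpow_step (maxn n m)) => z [_ [hz _]].
exists z; split; first by exists (maxn n m).
by split; [apply: (run_wpow_le (leq_maxl n m) ha) | apply: (run_wpow_le (leq_maxr n m) hc)].
Qed.

End IncreasingIterates.

Lemma accel_lub (w : seq (lab T)) (x y gx : st T) :
  run w x = Some gx -> lt (@le T) x gx -> accel w x y -> is_lub (@le T) (orbit w x) y.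
Proof.
move=> hg hlt [gx' [hg' [[_ hl]|[hn _]]]]; last by rewrite hg in hg'; case: hg' => ?; subst gx'.
by split=> [z [n hz]|u hu]; [apply: (is_lub_ub hl); exists n; rewrite iterp_run
  | case: hl => _; apply=> z [n]; rewrite iterp_run => hz; apply: hu; exists n].
Qed.

Lemma accel_ge (w : seq (lab T)) (x y gx : st T) :
  run w x = Some gx -> accel w x y -> le gx y.
Proof.
move=> hg [gx' [hg' [[_ hl]|[_ ->]]]]; rewrite hg in hg'; case: hg' => ?; subst gx'.
  by apply: (is_lub_ub hl); exists 1; rewrite /= hg.
exact: po_refl.
Qed.

Lemma accel_not_lt (w : seq (lab T)) (x y gx : st T) :
  run w x = Some gx -> ~ lt (@le T) x gx -> accel w x y -> y = gx.
Proof.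
move=> hg hn [gx' [hg' hcase]]; rewrite hg in hg'; case: hg' => ?; subst gx'.
by case: hcase => [[/hn []]|[_ ->]].
Qed.

Lemma scott_closed_accel C (w : seq (lab T)) (x y : st T) :
  scott_closed (@le T) C -> post_closed C -> C x -> accel w x y -> C y.
Proof.
move=> hC hpc hx hacc; have [gx [hg _]] := hacc.
have hgx : C gx := post_closed_run hpc hx hg.
case: (classic (lt (@le T) x gx)) => hlt; last by rewrite (accel_not_lt hg hlt hacc).
apply: (scott_closed_lub hC (directed_orbit hg (proj1 hlt)) (accel_lub hg hlt hacc)).
by move=> z [n hz]; apply: post_closed_run hpc hx hz.
Qed.

Lemma post_closed_cl X : (forall f x y, X x -> act f x = Some y -> cl (@le T) X y) ->
  post_closed (cl (@le T) X).
Proof.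
move=> hX f x y hx hy.
have hP := scott_closed_preimage_partial le_po (act_pc f) (scott_closed_cl (@le T) X).
by apply: (cl_least hP _ hx) hy => z hz y'; apply: hX.
Qed.

Lemma cover_refl (s0 : st T) : cover s0 s0.
Proof. by exists s0, s0; do !split; [apply: po_refl|exists [::]|apply: po_refl]. Qed.

Lemma post_closed_cover (s0 : st T) : post_closed (cover s0).
Proof.
move=> f x y [y0 [z [hy0 [[u hu] hxz]]]] hxy.
case: (partial_continuous_mono le_po (act_pc f) hxz hxy) => z' [hz' hle].
exists y0, z'; split => //; split => //.
by exists (u ++ [:: f]); rewrite run_cat hu /= hz'.
Qed.

Lemma post_closed_cl_cover (s0 : st T) : post_closed (cl (@le T) (cover s0)).
Proof.
apply: post_closed_cl => f x y hx hy; apply: subset_cl.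
exact: post_closed_cover hx hy.
Qed.

Lemma clover_stop_post_closed A : clover_stop A -> post_closed (down (@le T) A).
Proof.
move=> hstop f y y' [a [ha hya]] hy.
case: (partial_continuous_mono le_po (act_pc f) hya hy) => a' [ha' hle].
by apply: hstop; exists a'; split => //; exists a, f.
Qed.

End Runs.

Lemma increasing_lt (e : nat -> nat) : (forall n, e n < e n.+1) ->
  forall n m, n < m -> e n < e m.
Proof.
move=> he n; elim=> [|m IH] //; rewrite ltnS leq_eqVlt => /orP[/eqP->|h] //.
exact: ltn_trans (IH h) (he m).
Qed.

Lemma infinitely_often_enum (P : nat -> Prop) : (forall n, exists i, n <= i /\ P i) ->
  exists e : nat -> nat, (forall n, e n < e n.+1) /\ (forall n, P (e n)).
Proof.
move=> h; case: (choice _ h) => g hg.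
pose e := fix e n := if n is n'.+1 then g (e n').+1 else g 0.
exists e; split => [n|[|n]] /=; [by case: (hg (e n).+1)| by case: (hg 0)|].
by case: (hg (e n).+1).
Qed.

Lemma well_founded_no_descending (S : Type) (R : S -> S -> Prop) (y : nat -> S) :
  well_founded R -> ~ (forall n, R (y n.+1) (y n)).
Proof.
move=> hwf hy.
suff H : forall a, Acc R a -> forall n, y n <> a by exact: (H _ (hwf (y 0)) 0).
move=> a; elim=> {}a _ IH n hn; apply: (IH (y n.+1)) => //.
by rewrite -hn.
Qed.

Lemma pigeonhole_infinite (Q : finType) (c : nat -> Q) :
  exists q, forall n, exists i, n <= i /\ c i = q.
Proof.
apply: NNPP => hno.
have : forall q, exists N, forall i, N <= i -> c i <> q.
  move=> q; apply: NNPP => h1; apply: hno; exists q => n; apply: NNPP => h2; apply: h1.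
  by exists n => i hi hci; apply: h2; exists i.
case/(choice _) => N hN.
pose M := \max_(q : Q) N q.
by apply: (hN (c M) M) => //; rewrite /M (bigmax_sup (c M)).
Qed.

Lemma injective_unbounded (f : nat -> nat) : injective f -> forall m, exists r, m <= f r.
Proof.
move=> hf m; apply: NNPP => hno.
have hlt r : f r < m by rewrite ltnNge; apply/negP => h; apply: hno; exists r.
pose g (r : 'I_m.+1) : 'I_m := Ordinal (hlt r).
have hg : injective g by move=> x y /(congr1 val) /= /hf /val_inj.
by have := leq_card g hg; rewrite !card_ord ltnn.
Qed.

Section Wpo.
Variables (S : Type) (le : S -> S -> Prop).
Hypotheses (le_po : partial_order le) (le_wpo : wpo le).

(* Either infinitely many indices have no strictly smaller successor, and they form an
   antichain, or from some point on every term has a strictly smaller successor. *)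
Lemma wpo_good_pair (x : nat -> S) : exists i j, i < j /\ le (x i) (x j).
Proof.
apply: NNPP => hbad.
have bad i j : i < j -> ~ le (x i) (x j) by move=> hij hle; apply: hbad; exists i, j.
case: le_wpo => hwf hanti.
case: (classic (forall n, exists i, n <= i /\ forall j, i < j -> ~ lt le (x j) (x i))) => hA.
- case: (infinitely_often_enum hA) => e [he hP]; apply: hanti; exists (fun k => x (e k)).
  move=> k l hkl; case: (ltngtP k l) => [hlt|hgt|/hkl] //; first exact: bad (increasing_lt he hlt).
  move=> hle; apply: (hP l (e k) (increasing_lt he hgt)); split => // heq.
  by apply: (bad _ _ (increasing_lt he hgt)); rewrite heq; apply: po_refl.
have [n hn] : exists n, forall i, n <= i -> exists j, i < j /\ lt le (x j) (x i).
  apply: NNPP => hno; apply: hA => n; apply: NNPP => h1; apply: hno; exists n => i hi.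
  apply: NNPP => h2; apply: h1; exists i; split => // j hj hlt; apply: h2; by exists j.
have : forall i, exists j, n <= i -> n <= j /\ lt le (x j) (x i).
  move=> i; case: (classic (n <= i)) => hi; last by exists 0 => /hi.
  case: (hn i hi) => j [hij hl]; exists j => _; split => //.
  exact: leq_trans hi (ltnW hij).
case/(choice _) => g hg.
pose e := fix e k := if k is k'.+1 then g (e k') else n.
have he k : n <= e k by elim: k => [|k IH] //=; case: (hg (e k) IH).
apply: (well_founded_no_descending (y := fun k => x (e k)) hwf) => k /=.
by case: (hg (e k) (he k)).
Qed.

End Wpo.

Lemma uniform_bound_lt (P : nat -> nat -> Prop) N :
  (forall i m m', m <= m' -> P i m -> P i m') ->
  (forall i, i < N -> exists m, P i m) -> exists m, forall i, i < N -> P i m.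
Proof.
move=> hmono; elim: N => [|N IH] h; first by exists 0.
case: IH => [i hi|m hm]; first by apply: h; apply: ltnW.
case: (h N (ltnSn N)) => m' hm'.
exists (maxn m m') => i; rewrite ltnS leq_eqVlt => /orP[/eqP->|hi].
  by apply: (hmono _ m'); rewrite ?leq_maxr.
by apply: (hmono _ m); rewrite ?leq_maxl //; apply: hm.
Qed.

Section CloverSet.
Variables (T : TS) (s0 : st T) (b : nat -> st T).
Local Notation A := (clover_set s0 b).
Local Notation D m := (down (@le T) (A m)).

Lemma clover_set_mono m m' x : m <= m' -> A m x -> A m' x.
Proof.
move=> hm [->|[k [hk ->]]]; first by left.
by right; exists k; split => //; apply: leq_trans hk hm.
Qed.

Lemma clover_setS m y : A m.+1 y -> A m y \/ y = b m.
Proof.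
case=> [->|[k [hk ->]]]; first by left; left.
move: hk; rewrite ltnS leq_eqVlt => /orP[/eqP->|hk]; first by right.
by left; right; exists k.
Qed.

Lemma down_clover_set_mono m m' x : m <= m' -> D m x -> D m' x.
Proof. by move=> hm [y [hy hle]]; exists y; split => //; apply: clover_set_mono hy. Qed.

Lemma clover_set_uniform (P : st T -> nat -> Prop) m0 :
  (forall x m m', m <= m' -> P x m -> P x m') ->
  (forall x, A m0 x -> exists m, P x m) -> exists m, forall x, A m0 x -> P x m.
Proof.
move=> hmono h; pose elem i := if i is k.+1 then b k else s0.
have elem_A i : i < m0.+1 -> A m0 (elem i) by case: i => [|k] /= hk; [left|right; exists k].
case: (@uniform_bound_lt (fun i m => P (elem i) m) m0.+1) => [i m m'|i hi|m hm].
- exact: hmono.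
- exact: h (elem_A i hi).
by exists m => x [->|[k [hk ->]]]; [apply: (hm 0) | apply: (hm k.+1)].
Qed.

Hypothesis le_po : partial_order (@le T).

Lemma down_clover_set_refl m x : A m x -> D m x.
Proof. by move=> h; exists x; split => //; apply: po_refl. Qed.

Lemma down_clover_set_le m x y : le x y -> D m y -> D m x.
Proof. by move=> hxy [z [hz hle]]; exists z; split => //; apply: po_trans hle. Qed.

Lemma directed_bounded_clover_set m Dir : directed (@le T) Dir ->
  (forall d, Dir d -> D m d) -> exists y, A m y /\ forall d, Dir d -> le d y.
Proof.
elim: m Dir => [|m IH] Dir hDir hD.
  exists s0; split; first by left.
  by move=> d hd; case: (hD d hd) => y [[->|[k []]] hle].
case: (classic (forall d, Dir d -> le d (b m))) => hall.
  by exists (b m); split => //; right; exists m.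
have [d0 [hd0 hnd0]] : exists d0, Dir d0 /\ ~ le d0 (b m).
  apply: NNPP => hn; apply: hall => d hd; apply: NNPP => h; apply: hn.
  by exists d.
case: (IH (above (@le T) Dir d0)).
- exact: (directed_above le_po hDir hd0).
- move=> d [hd hd0d]; case: (hD d hd) => y [hy hle].
  case: (clover_setS hy) => [hy'|hyb]; first by exists y.
  by case: hnd0; rewrite -hyb; apply: po_trans hd0d hle.
move=> y [hy hb]; exists y; split; first exact: clover_set_mono (leqnSn m) hy.
move=> d hd; case: hDir => _ hDir.
case: (hDir d d0 hd hd0) => e [he [hde hd0e]].
exact: (po_trans le_po hde (hb e (conj he hd0e))).
Qed.

Lemma scott_closed_down_clover_set m : scott_closed (@le T) (D m).
Proof.
split; first by move=> x y hx hxy hy; apply: hx; apply: down_clover_set_le hxy hy.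
move=> Dir l hDir hl hnl; apply: NNPP => hno; apply: hnl.
case: (@directed_bounded_clover_set m Dir hDir) => [d hd|y [hy hb]].
  by apply: NNPP => hn; apply: hno; exists d.
by exists y; split => //; case: hl => _; apply.
Qed.

End CloverSet.

Section Languages.
Variable L : Type.

Lemma in_lang_nil (ws : seq (seq L)) : in_lang ws [::].
Proof. by elim: ws => //= W ws IH; exists 0, [::]. Qed.

Lemma in_lang_cat (ws1 ws2 : seq (seq L)) u1 u2 :
  in_lang ws1 u1 -> in_lang ws2 u2 -> in_lang (ws1 ++ ws2) (u1 ++ u2).
Proof.
elim: ws1 u1 => [|W ws IH] u1 /=; first by move=> ->.
move=> [n [u' [-> h]]] h2; exists n, (u' ++ u2); split; first by rewrite catA.
exact: IH.
Qed.

Lemma in_lang_wpow (W : seq L) ws n u :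
  in_lang ws u -> in_lang (W :: ws) (wpow W n ++ u).
Proof. by move=> h; exists n, u. Qed.

Lemma in_lang_catl (ws1 ws2 : seq (seq L)) u : in_lang ws2 u -> in_lang (ws1 ++ ws2) u.
Proof. by move=> h; rewrite -[u]cat0s; apply: in_lang_cat => //; apply: in_lang_nil. Qed.

Lemma in_lang_rcons (ws : seq (seq L)) W u n :
  in_lang ws u -> in_lang (rcons ws W) (u ++ wpow W n).
Proof.
move=> h; rewrite -cats1; apply: in_lang_cat => //.
by rewrite -[wpow W n]cats0; apply: in_lang_wpow; apply: in_lang_nil.
Qed.

Lemma in_lang_map (L' : Type) (h : L -> L') ws u :
  in_lang ws u -> in_lang (map (map h) ws) (map h u).
Proof.
elim: ws u => [|W ws IH] u /=; first by move=> ->.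
move=> [n [u2 [-> hin]]]; exists n, (map h u2); split; last exact: IH.
by rewrite map_cat map_wpow.
Qed.

Lemma cat_wpow_decomp (W u v u2 : seq L) n : u ++ v = wpow W n ++ u2 ->
  (exists u', u = wpow W n ++ u' /\ u' ++ v = u2) \/
  (exists n' j, j < size W /\ u = wpow W n' ++ take j W).
Proof.
elim: n u => [|n IH] u /= huv; first by left; exists u.
rewrite -catA in huv.
case: (ltnP (size u) (size W)) => hs.
  right; exists 0, (size u); split => //=.
  have := congr1 (take (size u)) huv.
  by rewrite (take_size_cat (s1:=u) v erefl) (takel_cat (s1:=W)) // ltnW.
have hu : u = W ++ drop (size W) u.
  have := congr1 (take (size W)) huv.
  rewrite (takel_cat (s1:=u)) // (take_size_cat (s1:=W) _ erefl) => hW.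
  by rewrite -{1}(cat_take_drop (size W) u) hW.
have huv' : drop (size W) u ++ v = wpow W n ++ u2.
  move: huv; rewrite {1}hu -catA => huv.
  have := congr1 (drop (size W)) huv.
  by rewrite !(drop_size_cat (s1:=W) _ erefl).
case: (IH _ huv') => [[u' [h1 h2]]|[n' [j [hj h1]]]].
  by left; exists u'; rewrite hu h1 catA.
by right; exists n'.+1, j; split => //=; rewrite hu h1 catA.
Qed.

End Languages.

Section FairRun.
Variable T : TS.
Hypotheses (le_po : partial_order (@le T))
  (act_pc : forall f, partial_continuous (@le T) (act f)) (le_wpo : wpo (@le T)).
Variables (s0 : st T) (w : nat -> seq (lab T)) (a b : nat -> st T).
Hypothesis fair : clover_fair_infinite_run s0 w a b.
Local Notation A := (clover_set s0 b).
Local Notation D m := (down (@le T) (A m)).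

Lemma fair_accel m (g : seq (lab T)) x gx : A m x -> run g x = Some gx ->
  exists m', A m'.+1 (b m') /\ accel g x (b m').
Proof.
move=> hx hg; case: fair => hrun hf.
case: (hf m g x hx); first by rewrite /dom hg.
move=> m' [_ [hw ha]]; exists m'; split; first by right; exists m'.
by case: (hrun m') => _ [_]; rewrite hw ha.
Qed.

Lemma fair_run_bounded m u x y : A m x -> run u x = Some y -> exists m', D m' y.
Proof.
move=> hx hy; case: (fair_accel hx hy) => m' [hA hacc].
by exists m'.+1, (b m'); split => //; apply: accel_ge hy hacc.
Qed.

Lemma fair_step_not_lt m g y z : A m y -> run g y = Some z -> ~ lt (@le T) y z ->
  exists m', A m' z.
Proof.
move=> hy hz hn; case: (fair_accel hy hz) => m' [hA hacc].
by exists m'.+1; rewrite -(accel_not_lt hz hn hacc).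
Qed.

Definition bounded_iterates (g : seq (lab T)) (x : st T) : Prop :=
  exists M, forall n z, run (wpow g n) x = Some z -> D M z.

Lemma bounded_iterates_nondecreasing m h y : A m y ->
  (forall hy, run h y = Some hy -> le y hy) -> bounded_iterates h y.
Proof.
move=> hy; case E: (run h y) => [hy'|] hle; last first.
  exists m => -[|n] z /=; first by move=> [<-]; apply: down_clover_set_refl.
  by rewrite run_cat E.
case: (fair_accel hy E) => m' [hb hacc].
case: (classic (lt (@le T) y hy')) => hlt.
  exists m'.+1 => n z hz; exists (b m'); split => //.
  by apply: (is_lub_ub (accel_lub E hlt hacc)); exists n.
exists m => n z; rewrite -(le_lt_eq (hle _ erefl) hlt) in E.
by rewrite (run_wpow_fixpoint n E) => -[<-]; apply: down_clover_set_refl.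
Qed.

Lemma bounded_iterates_prefix m0 g x N : A m0 x ->
  exists M, forall n z, n < N -> run (wpow g n) x = Some z -> D M z.
Proof.
move=> hx.
case: (@uniform_bound_lt (fun n M => forall z, run (wpow g n) x = Some z -> D M z) N).
- by move=> i m m' hm h z hz; apply: down_clover_set_mono hm (h z hz).
- move=> n _; case E: (run (wpow g n) x) => [z|]; last by exists 0.
  by case: (fair_run_bounded hx E) => m' hm'; exists m' => z' [<-].
by move=> M hM; exists M => n z hn; apply: hM.
Qed.

Lemma bounded_iterates_periodic m0 g x i p : A m0 x -> 0 < p ->
  (forall r, r < p ->
     exists y, run (wpow g (i + r)) x = Some y /\ bounded_iterates (wpow g p) y) ->
  bounded_iterates g x.
Proof.
move=> hx hp hper.
case: (@uniform_bound_lt (fun r M => forall y, run (wpow g (i + r)) x = Some y ->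
    forall q z, run (wpow (wpow g p) q) y = Some z -> D M z) p).
- by move=> r m m' hm h y hy q z hz; apply: down_clover_set_mono hm (h y hy q z hz).
- move=> r hr; case: (hper r hr) => y [hy [M hM]].
  by exists M => y'; rewrite hy => -[<-].
move=> M1 hM1; case: (bounded_iterates_prefix g i hx) => M0 hM0.
exists (maxn M0 M1) => n z hz.
case: (ltnP n i) => hn; first by apply: (down_clover_set_mono (leq_maxl _ _)); apply: hM0 hz.
apply: (down_clover_set_mono (leq_maxr _ _)).
have hn' : n = i + (n - i) %% p + p * ((n - i) %/ p).
  by rewrite -addnA (addnC ((n - i) %% p)) mulnC -divn_eq subnKC.
move: hz; rewrite hn' run_wpow_add wpow_mul.
case E: (run _ x) => [y|] // hz.
exact: hM1 (ltn_pmod _ hp) y E _ z hz.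
Qed.

(* Either some iterate in a Clover set has a nondecreasing successor, where fairness
   accelerates, or every step stays in the Clover sets and the wpo yields a period. *)
Lemma bounded_iterates_clover_set m0 g x : A m0 x -> bounded_iterates g x.
Proof.
move=> hx; pose X n := run (wpow g n) x.
case: (classic (exists k y m, X k = Some y /\ A m y /\
                  forall hy, run g y = Some hy -> le y hy)) => [[k [y [m [hk [hy hle]]]]]|hno].
  apply: (bounded_iterates_periodic (i := k) (p := 1) hx) => // r.
  rewrite ltnS leqn0 => /eqP ->; exists y; rewrite addn0; split => //.
  by apply: (bounded_iterates_nondecreasing hy) => hy'; rewrite /= cats0; apply: hle.
have hall k : exists y, X k = Some y /\ exists m, A m y.
  elim: k => [|k [y [hk [m hy]]]]; first by exists x; split => //; exists m0.
  have [z [hz hnle]] : exists z, run g y = Some z /\ ~ le y z.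
    apply: NNPP => hn; apply: hno; exists k, y, m; split => //; split => // hy' hy'z.
    by apply: NNPP => hnle; apply: hn; exists hy'.
  exists z; split; first by rewrite /X run_wpowS -/(X k) hk.
  by apply: (fair_step_not_lt hy hz) => -[].
case: (choice _ hall) => xs hxs.
have hshift k r : X (k + r) = run (wpow g r) (xs k).
  by rewrite /X run_wpow_add -/(X k); case: (hxs k) => ->.
case: (wpo_good_pair le_po le_wpo xs) => i [j [hij hle]].
apply: (bounded_iterates_periodic (i := i) (p := j - i) hx); first by rewrite subn_gt0.
move=> r _; exists (xs (i + r)); split; first by case: (hxs (i + r)).
case: (hxs (i + r)) => _ [m hm]; apply: (bounded_iterates_nondecreasing hm) => y hy.
have hjr : X (i + r + (j - i)) = Some y by rewrite hshift.
rewrite addnAC subnKC ?(ltnW hij) // hshift in hjr.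
case: (run_mono le_po act_pc hle (_ : run (wpow g r) (xs i) = Some (xs (i + r)))) => [|y' []].
  by rewrite -hshift; case: (hxs (i + r)).
by rewrite hjr => -[<-].
Qed.

Lemma bounded_iterates_uniform m0 (g : seq (lab T)) :
  exists M, forall x, A m0 x -> forall n z, run (wpow g n) x = Some z -> D M z.
Proof.
apply: (@clover_set_uniform _ _ _ (fun x M => forall n z, run (wpow g n) x = Some z -> D M z)).
  by move=> x m m' hm h n z hz; apply: down_clover_set_mono hm (h n z hz).
by move=> x hx; apply: bounded_iterates_clover_set hx.
Qed.

Lemma bounded_prefixes_uniform m0 (W : seq (lab T)) :
  exists M, forall x, A m0 x -> forall j z, run (take j W) x = Some z -> D M z.
Proof.
apply: (@clover_set_uniform _ _ _ (fun x M => forall j z, run (take j W) x = Some z -> D M z)).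
  by move=> x m m' hm h j z hz; apply: down_clover_set_mono hm (h j z hz).
move=> x hx.
case: (@uniform_bound_lt (fun j M => forall z, run (take j W) x = Some z -> D M z) (size W).+1).
- by move=> i m m' hm h z hz; apply: down_clover_set_mono hm (h z hz).
- move=> j _; case E: (run (take j W) x) => [z|]; last by exists 0.
  by case: (fair_run_bounded hx E) => m' hm'; exists m' => z' [<-].
move=> M hM; exists M => j z; case: (ltnP j (size W).+1) => hj; first exact: hM.
by rewrite take_oversize ?(ltnW hj) // -{1}(take_size W); apply: hM.
Qed.

Lemma bounded_flat_runs (ws : seq (seq (lab T))) m0 : exists M, forall x, A m0 x ->
  forall u v z, in_lang ws (u ++ v) -> run u x = Some z -> D M z.
Proof.
elim: ws m0 => [|W ws IH] m0.
  exists m0 => x hx u v z /= huv; have -> : u = [::] by case: u huv.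
  by move=> [<-]; apply: down_clover_set_refl.
case: (bounded_iterates_uniform m0 W) => M1 hM1.
case: (IH M1) => M2 hM2.
case: (bounded_prefixes_uniform M1 W) => M3 hM3.
exists (maxn M2 M3) => x hx u v z [n [u2 [huv hin]]].
have lift k r M : (forall y, A M1 y -> forall z, run r y = Some z -> D M z) ->
    run (wpow W k ++ r) x = Some z -> D M z.
  rewrite run_cat; case E: (run _ x) => [y|] // hr hz.
  case: (hM1 x hx k y E) => y' [hy' hle].
  case: (run_mono le_po act_pc hle hz) => z' [hz' hle'].
  exact: (down_clover_set_le le_po hle' (hr y' hy' z' hz')).
case: (cat_wpow_decomp huv) => [[u' [-> hv]]|[n' [j [_ ->]]]]; apply: lift => y hy z' hz'.
  by apply: (down_clover_set_mono (leq_maxl _ _)); apply: (hM2 y hy u' v); rewrite ?hv.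
by apply: (down_clover_set_mono (leq_maxr _ _)); apply: hM3 hz'.
Qed.

Lemma fair_clover_set_cl_cover m x : A m x -> cl (@le T) (cover s0) x.
Proof.
elim: m x => [|m IH] x.
  by case=> [->|[k []]] //; apply: subset_cl; apply: (cover_refl le_po).
case/clover_setS => [/IH //|->].
case: fair => hrun _; case: (hrun m) => _ [ha hacc].
exact: (scott_closed_accel le_po act_pc (scott_closed_cl _ _)
          (post_closed_cl_cover le_po act_pc (s0 := s0)) (IH _ ha) hacc).
Qed.

Lemma fair_cl_cover_unbounded M : ~ (forall y, cl (@le T) (cover s0) y -> D M y).
Proof.
move=> hM; case: fair => hrun _; case: (hrun M) => hstop _; apply: hstop.
move=> x [p [[a' [f [ha' hp]]] hle]].
have hcl := post_closed_cl_cover le_po act_pc (fair_clover_set_cl_cover ha') hp.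
exact: (down_clover_set_le le_po hle (hM p hcl)).
Qed.

End FairRun.

Theorem weakly_clover_flattable_terminates (T : TS) (s0 : st T) :
  complete_ts T -> weakly_clover_flattable s0 -> clover_terminates s0.
Proof.
move=> [le_po [_ [le_wpo act_pc]]]
  [T1 [hs [hl [s1 [[le1_po [_ [_ act1_pc]]] [[ws hflat] [hmor [hcont [hle hsub]]]]]]]]].
move=> [w [a [b fair]]].
have closedM M := scott_closed_down_clover_set s0 b le_po M.
case: (bounded_flat_runs le_po act_pc le_wpo fair (map (map hl) ws) 0) => M hM.
apply: (fair_cl_cover_unbounded le_po act_pc fair (M := M)) => y /hsub.
apply: cl_least => // _ [x1 [hx1 <-]].
apply: (cl_least (scott_closed_preimage hcont (closedM M)) _ hx1).
move=> x [y1 [z1 [hy1 [[u hu] hxz]]]].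
case: (run_mono le1_po act1_pc hy1 hu) => z1' [hu' hz1'].
case: (run_mono le_po act_pc hle (run_morphism hmor hu')) => z [hz hz1z].
have hin : in_lang (map (map hl) ws) (map hl u ++ [::]).
  by rewrite cats0; apply: in_lang_map; apply: hflat; rewrite hu'.
case: hcont => hmono _.
have hxz' := po_trans le_po (hmono _ _ hxz) (po_trans le_po (hmono _ _ hz1') hz1z).
exact: (down_clover_set_le le_po hxz' (hM s0 (or_introl erefl) _ _ z hin hz)).
Qed.

Section SyncProduct.
Variables (T : TS) (Q : finType) (delta : Q -> lab T -> option Q).
Hypothesis complete_T : complete_ts T.
Local Notation P := (sync_product delta).

Let le_po : partial_order (@le T). Proof. by case: complete_T. Qed.
Let act_pc f : partial_continuous (@le T) (act f). Proof. by case: complete_T => _ [_ []]. Qed.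

Lemma sync_po : partial_order (@le P).
Proof.
split; first by move=> [x q]; split => //; apply: po_refl.
split; first by move=> [x q] [y r] [/= h1 ->] [/= h2 _]; rewrite (po_anti le_po h1 h2).
by move=> [x q] [y r] [z t] [/= h1 ->] [/= h2 ->]; split => //; apply: po_trans h1 h2.
Qed.

Lemma directed_sync_snd (D : st P -> Prop) : directed (@le P) D ->
  exists q, forall d, D d -> d.2 = q.
Proof.
move=> [[d0 hd0] hD]; exists d0.2 => d hd.
by case: (hD d d0 hd hd0) => z [_ [[_ ->] [_ ->]]].
Qed.

Lemma directed_sync_fst (D : st P -> Prop) : directed (@le P) D ->
  directed (@le T) (image fst D).
Proof. by apply: directed_image => x y []. Qed.

Lemma is_lub_sync_snd (D : st P -> Prop) l q : directed (@le P) D ->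
  is_lub (@le P) D l -> (forall d, D d -> d.2 = q) -> l.2 = q.
Proof. by move=> [[d0 hd0] _] [hub _] hq; case: (hub d0 hd0) => _ <-; apply: hq. Qed.

Lemma is_lub_sync_fst (D : st P -> Prop) l : directed (@le P) D -> is_lub (@le P) D l ->
  is_lub (@le T) (image fst D) l.1.
Proof.
move=> hD hl; have [hub hleast] := hl; split; first by move=> y [d [hd <-]]; case: (hub d hd).
move=> u hu; case: (directed_sync_snd hD) => q hq.
suff : le l (u, q) :> Prop by case.
by apply: hleast => d hd; split => /=; [apply: hu; exists d | apply: hq].
Qed.

Lemma is_lub_sync (D : st P -> Prop) l q : (exists d, D d) -> (forall d, D d -> d.2 = q) ->
  is_lub (@le T) (image fst D) l -> is_lub (@le P) D (l, q).
Proof.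
move=> [d0 hd0] hq [hub hleast]; split.
  by move=> d hd; split => /=; [apply: hub; exists d | apply: hq].
move=> [u r] hu; split => /=.
  by apply: hleast => y [d [hd <-]]; case: (hu d hd).
by case: (hu d0 hd0) => _ /= <-; rewrite (hq d0 hd0).
Qed.

Lemma sync_dcpo : dcpo (@le P).
Proof.
move=> D hD; case: (directed_sync_snd hD) => q hq.
case: complete_T => _ [[hdc _] _].
case: (hdc _ (directed_sync_fst hD)) => l hl.
by exists (l, q); apply: is_lub_sync => //; case: hD.
Qed.

Definition sync_lift (D : st T -> Prop) (q : Q) (p : st P) : Prop := D p.1 /\ p.2 = q.

Lemma directed_sync_lift D q : directed (@le T) D -> directed (@le P) (sync_lift D q).
Proof.
move=> [[d hd] hD]; split; first by exists (d, q).
move=> [x r] [y t] [/= hx ->] [/= hy ->].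
by case: (hD x y hx hy) => z [hz [h1 h2]]; exists (z, q).
Qed.

Lemma is_lub_sync_lift D q l : directed (@le T) D -> is_lub (@le T) D l ->
  is_lub (@le P) (sync_lift D q) (l, q).
Proof.
move=> [[d hd] _] [hub hleast]; apply: is_lub_sync; first by exists (d, q).
  by move=> p [].
split; first by move=> y [p [[hp _] <-]]; apply: hub.
by move=> u hu; apply: hleast => y hy; apply: hu; exists (y, q).
Qed.

Lemma way_below_sync (y : st P) s q :
  way_below (@le P) y (s, q) <-> y.2 = q /\ way_below (@le T) y.1 s.
Proof.
split=> [hwb|[hq hwb] D l hD hl [hsl hl2]].
  split.
    have hq := po_refl sync_po (s, q).
    case: (hwb _ _ (directed_pair sync_po hq) (is_lub_pair sync_po hq) hq) => z [hz [_ ->]].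
    by case: hz => ->.
  move=> D l hD hl hsl.
  case: (hwb _ _ (directed_sync_lift q hD) (is_lub_sync_lift q hD hl)) => [|[z r]].
    by split.
  by move=> [[hz _] [hle _]]; exists z.
case: (directed_sync_snd hD) => r hr.
case: (hwb _ _ (directed_sync_fst hD) (is_lub_sync_fst hD hl) hsl) => z [[d [hd <-]] hle].
exists d; split => //; split => //.
by rewrite hq (hr d hd) -(is_lub_sync_snd hD hl hr) -hl2.
Qed.

Lemma sync_continuous_dcpo : continuous_dcpo (@le P).
Proof.
split; first exact: sync_dcpo.
move=> [s q]; case: complete_T => _ [[_ hcont] _]; case: (hcont s) => hdir hlub.
have heq y : way_below (@le P) y (s, q) <-> sync_lift (fun t => way_below (@le T) t s) q y.
  by rewrite way_below_sync; split => -[].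
have [hD hl] := (directed_sync_lift q hdir, is_lub_sync_lift q hdir hlub).
split.
  case: hD => [[t ht] hD]; split; first by exists t; apply/heq.
  move=> x y /heq hx /heq hy; case: (hD x y hx hy) => z [hz hxyz].
  by exists z; split => //; apply/heq.
case: hl => hub hleast; split; first by move=> y /heq; apply: hub.
by move=> u hu; apply: hleast => y /heq; apply: hu.
Qed.

Lemma sync_wpo : wpo (@le P).
Proof.
case: complete_T => _ [_ [[hwf hanti] _]]; split.
  apply: (wf_incl _ _ _ _ (wf_inverse_image _ _ (lt (@le T)) fst hwf)).
  move=> [x q] [y r] [[/= h1 h2] hne]; split => // heq; apply: hne.
  by rewrite h2 heq.
move=> [c hc].
case: (pigeonhole_infinite (fun n => (c n).2)) => q hq.
case: (infinitely_often_enum hq) => e [he hEq].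
apply: hanti; exists (fun k => (c (e k)).1) => k l hkl hle.
have hne : e k <> e l.
  move=> heq; apply: hkl; case: (ltngtP k l) => // h;
    by have := increasing_lt he h; rewrite heq ltnn.
by apply: (hc _ _ hne); split => //; rewrite (hEq k) (hEq l).
Qed.

Lemma sync_act_fst (f : lab P) p p' : act f p = Some p' -> act (val f) p.1 = Some p'.1.
Proof.
by rewrite /=; case: (act (val f) p.1) => [s'|] //; case: (delta _ _) => [q'|] // [<-].
Qed.

Lemma dom_sync_act (f : lab P) p :
  dom (act f) p <-> dom (act (val f)) p.1 /\ delta p.2 (val f) <> None.
Proof.
case: p => x q; rewrite /dom /=.
by case: (act (val f) x) => [s'|]; case: (delta q (val f)) => [q'|]; split; intuition congruence.
Qed.

Lemma scott_open_dom_sync_act f : scott_open (@le P) (dom (act f)).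
Proof.
case: (act_pc (val f)) => [[hup ho] _]; split.
  move=> x y /dom_sync_act [h1 h2] [hxy hq]; apply/dom_sync_act.
  by split; [apply: hup h1 hxy | rewrite -hq].
move=> D l hD hl /dom_sync_act [h1 h2].
case: (directed_sync_snd hD) => q hq.
case: (ho _ _ (directed_sync_fst hD) (is_lub_sync_fst hD hl) h1) => _ [[d [hd <-]] hdd].
exists d; split => //; apply/dom_sync_act; split => //.
by rewrite (hq d hd) -(is_lub_sync_snd hD hl hq).
Qed.

Lemma sync_partial_continuous f : partial_continuous (@le P) (act f).
Proof.
split; first exact: scott_open_dom_sync_act.
move=> D l hD hdD hl.
case: (directed_sync_snd hD) => q hq; have hl2 := is_lub_sync_snd hD hl hq.
have hdD1 d : image fst D d -> dom (act (val f)) d.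
  by move=> [p [hp <-]]; case/dom_sync_act: (hdD p hp).
case: (act_pc (val f)) => _ hc.
case: (hc _ _ (directed_sync_fst hD) hdD1 (is_lub_sync_fst hD hl)) => y [hy hly].
have [[d0 hd0] _] := hD.
have : delta q (val f) <> None by case/dom_sync_act: (hdD d0 hd0); rewrite hq.
case Eq: (delta q (val f)) => [q'|] // _.
have hact d z : D d -> act f d = Some z <-> act (val f) d.1 = Some z.1 /\ z.2 = q'.
  case: d z => [x r] [z r'] /hq /= ->; rewrite Eq.
  by case: (act (val f) x) => [s'|]; split; intuition congruence.
exists (y, q'); split; first by rewrite /= hy hl2 Eq.
apply: is_lub_sync.
- case E: (act f d0) => [z|]; first by exists z, d0.
  by case: (hdD d0 hd0); rewrite /dom E.
- by move=> z [d [hd /(hact _ _ hd) []]].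
split=> [_ [z [[d [hd /(hact _ _ hd) [hz _]]] <-]]|u hu].
  by apply: (is_lub_ub hly); exists d.1; split => //; exists d.
case: hly => _; apply=> z [_ [[d [hd <-]] hz]].
by apply: hu; exists (z, q'); split => //; exists d; split => //; apply/hact.
Qed.

Lemma sync_complete : complete_ts P.
Proof.
split; first exact: sync_po.
split; first exact: sync_continuous_dcpo.
by split; [exact: sync_wpo | exact: sync_partial_continuous].
Qed.

End SyncProduct.

Section PrefixWords.
Variable L : eqType.

Lemma in_lang_mem (ws : seq (seq L)) W : W \in ws -> in_lang ws W.
Proof.
elim: ws => [|W' ws IH] //; rewrite inE => /orP[/eqP->|h].
  by exists 1, [::]; rewrite /= !cats0; split => //; apply: in_lang_nil.
by exists 0, W; split => //; apply: IH.
Qed.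

(* A prefix of a word of W1^* ... Wk^* stops after a proper prefix of some block;
   inserting these prefixes as extra blocks makes the prefix language flat again. *)
Definition prefix_blocks (ws : seq (seq L)) : seq (seq L) :=
  flatten [seq W :: [seq take j W | j <- iota 0 (size W)] | W <- ws].

Lemma in_lang_prefix_blocks (ws : seq (seq L)) u v :
  in_lang ws (u ++ v) -> in_lang (prefix_blocks ws) u.
Proof.
elim: ws u v => [|W ws IH] u v; first by case: u.
move=> [n [u2 [huv hin]]]; rewrite /prefix_blocks /= -/(prefix_blocks ws).
case: (cat_wpow_decomp huv) => [[u' [-> h2]]|[n' [j [hj ->]]]].
  by apply: in_lang_wpow; apply: in_lang_catl; apply: (IH u' v); rewrite h2.
apply: in_lang_wpow; rewrite -[take j W]cats0; apply: in_lang_cat; last exact: in_lang_nil.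
by apply: in_lang_mem; apply: map_f; rewrite mem_iota.
Qed.

End PrefixWords.

Section SubtypeWords.
Variables (L : eqType) (p : pred L) (sT : subType p).

Lemma map_val_pmap_insub (W : seq L) : all p W -> map val (pmap insub W : seq sT) = W.
Proof.
elim: W => [|x W IH] // /andP[hx hW].
by rewrite /= (insubT _ hx) /= SubK IH.
Qed.

Lemma in_lang_map_val (ws : seq (seq L)) (u : seq sT) :
  in_lang ws (map val u) -> in_lang (map (pmap insub) ws) u.
Proof.
elim: ws u => [|W ws IH] u /=; first by case: u.
move=> [[|n] [u2 [hu hin]]]; first by exists 0, u; split => //; apply: IH; rewrite hu.
have hW : all p W.
  have : all p (map val u) by elim: (u) => //= y u' ->; rewrite andbT valP.
  by rewrite hu /= -catA all_cat => /andP[].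
pose k := size (wpow W n.+1).
have htk : map val (take k u) = map val (wpow (pmap insub W : seq sT) n.+1).
  by rewrite map_take hu (take_size_cat _ erefl) map_wpow map_val_pmap_insub.
exists n.+1, (drop k u); split; first by rewrite -(inj_map val_inj htk) cat_take_drop.
by apply: IH; rewrite map_drop hu (drop_size_cat _ erefl).
Qed.

End SubtypeWords.

Lemma drun_cat (L Q : finType) (delta : Q -> L -> option Q) u v q :
  drun delta (u ++ v) q = if drun delta u q is Some q' then drun delta v q' else None.
Proof. by elim: u q => [|f u IH] q //=; case: (delta q f). Qed.

Lemma sync_run (T : TS) (Q : finType) (delta : Q -> lab T -> option Q)
    (u : seq (lab (sync_product delta))) s q :
  run u ((s, q) : st (sync_product delta)) =
  if (run (map val u) s, drun delta (map val u) q) is (Some s', Some q')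
  then Some (s', q') else None.
Proof.
elim: u s q => [|f u IH] s q //=.
by case: (act (val f) s) => [s'|] //; case: (delta q (val f)) => [q'|] //; case: (run _ _).
Qed.

Theorem strongly_clover_flattable_flattable (T : TS) (s0 : st T) :
  complete_ts T -> strongly_clover_flattable s0 -> clover_flattable s0.
Proof.
move=> hT [Q [delta [q0 [[ws hws] heq]]]].
exists (sync_product delta), fst, val, (s0, q0).
split; first exact: sync_complete.
split.
  exists (map (pmap insub) (prefix_blocks ws)) => u hu; apply: in_lang_map_val.
  have : drun delta (map val u) q0 <> None.
    by move: hu; rewrite sync_run; case: (run _ _) => //; case: (drun _ _ _).
  by case/hws => v; apply: in_lang_prefix_blocks.
split; first by move=> f s s'; apply: sync_act_fst.
split; last by split.
by split=> [x y []|D l hD hl]; last apply: is_lub_sync_fst.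
Qed.

Lemma clover_flattable_weakly (T : TS) (s0 : st T) :
  partial_order (@le T) -> clover_flattable s0 -> weakly_clover_flattable s0.
Proof.
move=> le_po [T1 [hs [hl [s1 [h1 [h2 [h3 [h4 [<- h6]]]]]]]]].
exists T1, hs, hl, s1; do 4!(split; first by []).
by split=> [|x /h6]; first exact: (po_refl le_po).
Qed.

Section BlockDecomposition.
Variable L : Type.
Local Notation block ws i := (nth [::] ws i).

Lemma in_lang_take_mono (ws : seq (seq L)) i i' z : i <= i' ->
  in_lang (take i ws) z -> in_lang (take i' ws) z.
Proof.
move=> hii h; rewrite -(cat_take_drop i (take i' ws)) -take_min (minn_idPl hii).
by rewrite -[z]cats0; apply: in_lang_cat => //; apply: in_lang_nil.
Qed.

Lemma in_lang_takeS (ws : seq (seq L)) i z m : i < size ws ->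
  in_lang (take i ws) z -> in_lang (take i.+1 ws) (z ++ wpow (block ws i) m).
Proof. by move=> hi h; rewrite (take_nth [::] hi); apply: in_lang_rcons. Qed.

Lemma in_lang_last_block (ws : seq (seq L)) z : in_lang ws z -> z <> [::] ->
  exists i m z0, i < size ws /\ block ws i <> [::] /\ in_lang (take i ws) z0 /\
    z = z0 ++ wpow (block ws i) m.+1.
Proof.
elim: ws z => [|W ws IH] z /=; first by move=> ->.
move=> [n [[|c z2] [-> hin]]] hz.
  rewrite cats0 in hz *; case: n hz => [|n] hz //.
  exists 0, n, [::]; split => //; split; last by split => //; apply: in_lang_nil.
  by move=> /= hW; apply: hz; rewrite hW; elim: n.
case: (IH (c :: z2) hin) => // i [m [z0 [hi [hne [hz0 ->]]]]].
exists i.+1, m, (wpow W n ++ z0); do 2!split => //.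
by split; [exists n, z0 | rewrite catA].
Qed.

Lemma in_lang_prefix_position (ws : seq (seq L)) u v : in_lang ws (u ++ v) -> u <> [::] ->
  exists i j z n, i < size ws /\ j < size (block ws i) /\ in_lang (take i ws) z /\
    u = z ++ wpow (block ws i) n ++ take j (block ws i).
Proof.
elim: ws u => [|W ws IH] u /=; first by case: u.
move=> [n [u2 [huv hin]]] hu.
case: (cat_wpow_decomp huv) => [[[|c u'] [h1 h2]]|[n' [j [hj h1]]]].
- rewrite cats0 in h1.
  have hW : 0 < size W by case: W h1 {huv} => [|c0 W] h1 //; case: hu; rewrite h1; elim: n {h1}.
  exists 0, 0, [::], n; do 2!split => //; split; first exact: in_lang_nil.
  by rewrite h1 /= take0 cats0.
- case: (IH (c :: u')) => [|//|i [j [z [m [hi [hj [hz hu']]]]]]]; first by rewrite h2.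
  exists i.+1, j, (wpow W n ++ z), m; do 2!split => //.
  by split; [exists n, z | rewrite h1 hu' !catA].
- by exists 0, j, [::], n'; do 2!split => //.
Qed.

End BlockDecomposition.

Section PositionAutomaton.
Variables (L : finType) (ws : seq (seq L)).
Local Notation block i := (nth [::] ws i).

Definition max_block_size := \max_(W <- ws) size W.
Definition position := ('I_(size ws).+1 * 'I_max_block_size.+1)%type.
Definition pos_nat (p : position) : nat * nat := (nat_of_ord p.1, nat_of_ord p.2).
Definition valid_pos (x : nat * nat) := (x.1 < size ws) && (x.2 < size (block x.1)).

(* Reading the letter at offset x.2 of block x.1 either advances inside the block or,
   at its end, jumps to the start of the same or of any later block. *)
Definition pos_step (x y : nat * nat) (f : L) : bool :=
  valid_pos x && (nth f (block x.1) x.2 == f) &&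
  (if x.2.+1 < size (block x.1) then y == (x.1, x.2.+1)
   else (x.1 <= y.1) && (y.2 == 0) && valid_pos y).

Definition next_positions (S : {set position}) (f : L) : {set position} :=
  [set y | [exists x in S, pos_step (pos_nat x) (pos_nat y) f]].
Definition initial_positions : {set position} :=
  [set y | (pos_nat y).2 == 0 & valid_pos (pos_nat y)].
Definition positions_delta (S : {set position}) (f : L) : option {set position} :=
  if next_positions S f == set0 then None else Some (next_positions S f).
Definition reach_positions (S : {set position}) (u : seq L) := foldl next_positions S u.

Lemma reach_positions0 u : reach_positions set0 u = set0.
Proof.
elim: u => //= f u; suff -> : next_positions set0 f = set0 by [].
by apply/setP => y; rewrite !inE; apply/existsP => -[x]; rewrite inE.
Qed.

Lemma drun_positions_delta u S :
  drun positions_delta u S <> None <-> u = [::] \/ reach_positions S u != set0.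
Proof.
elim: u S => [|f u IH] S /=; first by split => // _; left.
rewrite /positions_delta; case: ifP => [/eqP->|hne].
  by rewrite reach_positions0 eqxx; split => // -[].
rewrite IH; split => [[->|h]|[//|h]]; [right; by rewrite /= hne|by right|by right].
Qed.

Definition read_to (u : seq L) (x : nat * nat) : Prop :=
  valid_pos x /\ exists z n, in_lang (take x.1 ws) z /\
    u = z ++ wpow (block x.1) n ++ take x.2 (block x.1).

Lemma read_to_block_start u i z m y : i < size ws -> in_lang (take i ws) z ->
  u = z ++ wpow (block i) m.+1 -> i <= y.1 -> y.2 = 0 -> valid_pos y -> read_to u y.
Proof.
move=> hi hz hu hy1 hy2 hv; split => //.
case: (ltngtP i y.1) hy1 => // [hlt|heq] _.
  exists u, 0; rewrite hy2 take0 /= cats0; split => //.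
  by apply: (in_lang_take_mono hlt); rewrite hu; apply: in_lang_takeS.
by exists z, m.+1; rewrite -heq hy2 take0 cats0.
Qed.

Lemma read_to_step u x y f : read_to u x -> pos_step x y f -> read_to (u ++ [:: f]) y.
Proof.
move=> [/andP[hi hj] [z [n [hz ->]]]] /andP[/andP[_ /eqP hnth] hcase].
case: ifP hcase => hlt.
  move/eqP=> ->; split; first by rewrite /valid_pos /= hi.
  by exists z, n; split => //=; rewrite (take_nth f hj) hnth -!catA cats1.
move=> /andP[/andP[hy1 /eqP hy2] hvy].
have hs : size (block x.1) = x.2.+1 by apply/eqP; rewrite eqn_leq hj andbT leqNgt hlt.
apply: (read_to_block_start (i := x.1) (z := z) (m := n)) => //.
have ht : take x.2 (block x.1) ++ [:: f] = block x.1.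
  by rewrite cats1 -hnth -(take_nth f hj) -hs take_size.
by rewrite -!catA ht -addn1 wpow_add /= cats0 catA.
Qed.

Lemma reach_positions_sound u y : y \in reach_positions initial_positions u ->
  read_to u (pos_nat y).
Proof.
have gen (S : {set position}) p : (forall y, y \in S -> read_to p (pos_nat y)) ->
    forall y, y \in reach_positions S u -> read_to (p ++ u) (pos_nat y).
  elim: u S p {y} => [|f u IH] S p hS y /=; first by rewrite cats0; apply: hS.
  move=> hy; rewrite -cat1s catA; apply: (IH _ _ _ y hy) => y'.
  by rewrite inE => /existsP[x /andP[hx hst]]; apply: read_to_step (hS x hx) hst.
move=> hy; rewrite -[u]cat0s; apply: (gen initial_positions) hy => x.
rewrite inE => /andP[/eqP h0 hv]; split => //.
by exists [::], 0; split; [exact: in_lang_nil | rewrite h0 take0].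
Qed.

Definition to_pos (x : nat * nat) : position := (inord x.1, inord x.2).

Lemma pos_nat_to_pos x : valid_pos x -> pos_nat (to_pos x) = x.
Proof.
case: x => i j /andP[/= hi hj]; rewrite /pos_nat /= !inordK //; last exact: ltnW.
have : size (block i) <= max_block_size by apply: bigmaxn_sup_seq => //; apply: mem_nth.
exact: leq_trans (ltnW hj).
Qed.

Lemma to_pos_next (S : {set position}) f x y : valid_pos x -> valid_pos y -> to_pos x \in S ->
  pos_step x y f -> to_pos y \in next_positions S f.
Proof.
move=> hx hy hS hst; rewrite inE; apply/existsP; exists (to_pos x).
by rewrite hS /= !pos_nat_to_pos.
Qed.

Lemma reach_positions_rcons (S : {set position}) u f :
  reach_positions S (rcons u f) = next_positions (reach_positions S u) f.
Proof. by rewrite /reach_positions foldl_rcons. Qed.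

Lemma reach_positions_block_start u f i z m y :
  (forall x, read_to u x -> to_pos x \in reach_positions initial_positions u) ->
  i < size ws -> block i <> [::] -> in_lang (take i ws) z ->
  rcons u f = z ++ wpow (block i) m.+1 ->
  valid_pos y -> i <= y.1 -> y.2 = 0 -> to_pos y \in reach_positions initial_positions (rcons u f).
Proof.
move=> IH hi hne hz hu hvy hy1 hy2.
have hs : 0 < size (block i) by case: (block i) hne.
set k := (size (block i)).-1.
have hk : k < size (block i) by rewrite prednK.
have hW : block i = rcons (take k (block i)) (nth f (block i) k).
  by rewrite -take_nth // prednK // take_size.
have [hu' e2] : (u, f) = (z ++ wpow (block i) m ++ take k (block i), nth f (block i) k).
  by apply: rcons_inj; rewrite hu -addn1 wpow_add /= cats0 {2}hW !rcons_cat.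
have hvx : valid_pos (i, k) by rewrite /valid_pos /= hi hk.
rewrite reach_positions_rcons; apply: (to_pos_next hvx hvy (IH _ _)).
  by split => //; exists z, m.
by rewrite /pos_step hvx /= -e2 eqxx /= prednK // ltnn hy1 hy2 eqxx hvy.
Qed.

Lemma reach_positions_complete u x : read_to u x ->
  to_pos x \in reach_positions initial_positions u.
Proof.
elim/last_ind: u x => [|u f IH] [i j] [hv [z [n [hz hu]]]].
  have hj0 : j = 0.
    have := congr1 size hu; rewrite !size_cat /= => /esym/eqP.
    rewrite !addn_eq0 => /andP[_ /andP[_ /eqP]].
    by rewrite size_takel //; case/andP: hv => _ /= /ltnW.
  by rewrite /reach_positions /= inE pos_nat_to_pos //= hj0 eqxx /= -hj0.
move: hz hu hv => /= hz hu hv; move: (hv) => /andP[/= hi hj].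
case: j hj hv hu => [|j] hj hv hu.
  rewrite take0 cats0 in hu; case: n hu => [|m] hu; last first.
    by apply: (reach_positions_block_start (i := i) (z := z) (m := m)) => //; case: (block i) hj.
  rewrite /= cats0 in hu.
  case: (in_lang_last_block hz) => [|i0 [m [z0 [hi0 [hne [hz0 hzz]]]]]].
    by rewrite -hu; case: (u).
  rewrite size_take hi in hi0; rewrite nth_take // in hne hzz.
  apply: (reach_positions_block_start (i := i0) (z := z0) (m := m)) => //.
  - exact: ltn_trans hi0 hi.
  - by rewrite -(minn_idPl (ltnW hi0)) take_min.
  - by rewrite hu.
  - exact: ltnW.
have hj' : j < size (block i) by apply: ltnW.
have [hu' e2] : (u, f) = (z ++ wpow (block i) n ++ take j (block i), nth f (block i) j).
  by apply: rcons_inj; rewrite hu (take_nth f hj') !rcons_cat.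
have hvx : valid_pos (i, j) by rewrite /valid_pos /= hi hj'.
rewrite reach_positions_rcons; apply: (to_pos_next hvx hv (IH _ _)).
  by split => //; exists z, n.
by rewrite /pos_step hvx /= -e2 eqxx /= hj eqxx.
Qed.

Lemma drun_positions_delta_prefix u :
  drun positions_delta u initial_positions <> None <-> exists v, in_lang ws (u ++ v).
Proof.
rewrite drun_positions_delta; split.
  case=> [->|]; first by exists [::]; apply: in_lang_nil.
  case/set0Pn => y /reach_positions_sound [/andP[hi hj] [z [n [hz ->]]]].
  exists (drop (pos_nat y).2 (block (pos_nat y).1)).
  rewrite -!catA cat_take_drop -{1}(cat_take_drop (pos_nat y).1 ws) (drop_nth [::] hi).
  apply: in_lang_cat => //; exists n.+1, [::].
  by split; [rewrite -[n.+1]addn1 wpow_add /= !cats0 | exact: in_lang_nil].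
case=> v hv; case: u hv => [|c u] hv; first by left.
right; case: (in_lang_prefix_position hv) => // i [j [z [n [hi [hj [hz hu]]]]]].
apply/set0Pn; exists (to_pos (i, j)); apply: reach_positions_complete.
by split; [rewrite /valid_pos /= hi hj | exists z, n].
Qed.

End PositionAutomaton.

Section CloverSchedule.
Variables (T : TS) (s0 : st T) (acc : seq (lab T) -> st T -> st T).
Hypothesis acc_spec : forall w x, dom (run w) x -> accel w x (acc w x).
Local Notation code := (nat * seq (lab T) * nat)%type.

(* Step n decodes n as (i, g, r) and accelerates g at the i-th element of A_n when this
   is admissible; since r is arbitrary, every admissible pair is chosen infinitely often. *)
Definition schedule_choice (bs : seq (st T)) (n : nat) : seq (lab T) * st T :=
  if (unpickle n : option code) is Some (i, g, _) then
    match excluded_middle_informative (i <= n /\ dom (run g) (nth s0 (s0 :: bs) i)) with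
    | left _ => (g, nth s0 (s0 :: bs) i)
    | right _ => ([::], s0)
    end
  else ([::], s0).

Fixpoint schedule_added (n : nat) : seq (st T) :=
  if n is n'.+1 then
    rcons (schedule_added n') (acc (schedule_choice (schedule_added n') n').1
                                   (schedule_choice (schedule_added n') n').2)
  else [::].

Definition schedule_w (n : nat) := (schedule_choice (schedule_added n) n).1.
Definition schedule_a (n : nat) := (schedule_choice (schedule_added n) n).2.
Definition schedule_b (n : nat) := acc (schedule_w n) (schedule_a n).

Lemma size_schedule_added n : size (schedule_added n) = n.
Proof. by elim: n => //= n IH; rewrite size_rcons IH. Qed.

Lemma nth_schedule_added n k : k < n -> nth s0 (schedule_added n) k = schedule_b k.
Proof.
elim: n => // n IH; rewrite ltnS leq_eqVlt => /orP[/eqP->|hk].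
  by rewrite /= nth_rcons size_schedule_added ltnn eqxx.
by rewrite /= nth_rcons size_schedule_added hk IH.
Qed.

Lemma schedule_choice_spec n :
  clover_set s0 schedule_b n (schedule_a n) /\ dom (run (schedule_w n)) (schedule_a n).
Proof.
rewrite /schedule_a /schedule_w /schedule_choice.
case: (unpickle n) => [[[i g] r]|]; last by split; [left|].
case: excluded_middle_informative => [[hi hd]|_]; last by split; [left|].
split => //; case: i hi {hd} => [|k] hi /=; first by left.
by right; exists k; split => //; rewrite nth_schedule_added.
Qed.

Lemma schedule_fair m g x : clover_set s0 schedule_b m x -> dom (run g) x ->
  exists m', m <= m' /\ schedule_w m' = g /\ schedule_a m' = x.
Proof.
move=> hx hd.
have [i [him hix]] : exists i, i <= m /\
    forall n, m <= n -> nth s0 (s0 :: schedule_added n) i = x.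
  case: hx => [->|[k [hk ->]]]; first by exists 0.
  exists k.+1; split => // n hn /=; apply: nth_schedule_added; exact: leq_trans hk hn.
have hinj : injective (fun r => pickle ((i, g, r) : code)).
  by move=> r1 r2 /(pcan_inj pickleK) [].
case: (injective_unbounded hinj m) => r hr.
exists (pickle ((i, g, r) : code)); split => //.
rewrite /schedule_w /schedule_a /schedule_choice pickleK.
case: excluded_middle_informative => [_|hn]; first by rewrite hix.
by case: hn; split; [apply: leq_trans hr|rewrite hix].
Qed.

Lemma schedule_accel k :
  exists g x, clover_set s0 schedule_b k x /\ accel g x (schedule_b k).
Proof.
case: (schedule_choice_spec k) => h1 h2.
by exists (schedule_w k), (schedule_a k); split => //; apply: acc_spec.
Qed.

Lemma clover_terminates_stop : clover_terminates s0 ->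
  exists M, clover_stop (clover_set s0 schedule_b M).
Proof.
move=> ht; apply: NNPP => hno; apply: ht.
exists schedule_w, schedule_a, schedule_b; split => [m|]; last exact: schedule_fair.
split; first by move=> hs; apply: hno; exists m.
case: (schedule_choice_spec m) => h1 h2; split => //.
exact: acc_spec.
Qed.

End CloverSchedule.

Lemma drun_prod_lab (L Q : finType) (delta : Q -> L -> option Q) u q :
  drun delta u q <> None -> all (fun f => [exists q, delta q f != None]) u.
Proof.
elim: u q => [|f u IH] q //=; case E: (delta q f) => [q'|] // h.
by rewrite (IH q' h) andbT; apply/existsP; exists q; rewrite E.
Qed.

Section TerminationFlattening.
Variables (T : TS) (s0 : st T).
Hypothesis complete_T : complete_ts T.
Let le_po : partial_order (@le T). Proof. by case: complete_T. Qed.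
Let act_pc f : partial_continuous (@le T) (act f). Proof. by case: complete_T => _ [_ []]. Qed.

Inductive accel_path : seq (seq (lab T)) -> st T -> Prop :=
| accel_path_nil : accel_path [::] s0
| accel_path_rcons p g x y : accel_path p x -> accel g x y -> accel_path (rcons p g) y.

Lemma clover_set_accel_paths (b : nat -> st T) M :
  (forall k, exists g x, clover_set s0 b k x /\ accel g x (b k)) ->
  exists ws, forall x, clover_set s0 b M x ->
    exists p pre post, ws = pre ++ p ++ post /\ accel_path p x.
Proof.
move=> hb.
have hp m x : clover_set s0 b m x -> exists p, accel_path p x.
  elim: m x => [|m IH] x; first by case=> [->|[k []]] //; exists [::]; constructor.
  case/clover_setS => [/IH //|->].
  case: (hb m) => g [y [hy hacc]]; case: (IH y hy) => p hpy.
  by exists (rcons p g); apply: accel_path_rcons hpy hacc.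
elim: M => [|M [ws hws]].
  by exists [::] => x [->|[k []]] //; exists [::], [::], [::]; split => //; constructor.
case: (hp M.+1 (b M)) => [|pM hpM]; first by right; exists M.
exists (ws ++ pM) => x /clover_setS [hx|->]; last by exists pM, ws, [::]; rewrite cats0.
case: (hws x hx) => p [pre [post [-> hpx]]].
by exists p, pre, (post ++ pM); split => //; rewrite !catA.
Qed.

Variables (Q : finType) (delta : Q -> lab T -> option Q) (q0 : Q).
Local Notation P := (sync_product delta).
Local Notation C := (cl (@le P) (cover ((s0, q0) : st P))).

Lemma cl_sync_fst_cl_cover x : cl (@le T) (image fst C) x -> cl (@le T) (cover s0) x.
Proof.
apply: cl_least; first exact: scott_closed_cl.
move=> _ [p [hp <-]].
have hfst : scott_continuous (@le (sync_product delta)) (@le T) fst.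
  by split; [move=> ? ? [] | move=> D l hD hl; apply: is_lub_sync_fst].
apply: (cl_least (scott_closed_preimage hfst (scott_closed_cl (@le T) (cover s0))) _ hp).
move=> y [y1 [z [[hy1 _] [[u hu] [hyz _]]]]].
apply: subset_cl; exists y1.1, z.1; do 2!split => //; exists (map val u).
by apply: (run_morphism _ hu) => f s s'; apply: sync_act_fst.
Qed.


Lemma cl_sync_run x q (g : seq (lab T)) z q' : C (x, q) -> run g x = Some z ->
  drun delta g q = Some q' -> C (z, q').
Proof.
move=> hC hz hq.
have hall : all (fun f => [exists q, delta q f != None]) g.
  by apply: (drun_prod_lab (q := q)); rewrite hq.
have hr : run (pmap insub g : seq (lab P)) ((x, q) : st P) = Some ((z, q') : st P).
  by rewrite sync_run map_val_pmap_insub // hz hq.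
have hpc := post_closed_cl_cover (sync_po delta complete_T) (sync_partial_continuous complete_T)
  (s0 := ((s0, q0) : st P)).
exact: post_closed_run hpc hC hr.
Qed.

(* The iterates whose automaton state is the recurring state qs form a directed set
   of the product with the same lub y as the whole orbit. *)
Lemma cl_sync_accel x q g gx y (qf : nat -> Q) qs : C (x, q) -> run g x = Some gx ->
  lt (@le T) x gx -> accel g x y -> (forall n, drun delta (wpow g n) q = Some (qf n)) ->
  (forall n, exists i, n <= i /\ qf i = qs) -> C (y, qs).
Proof.
move=> hC hg hlt hacc hqf hqs.
have [hub hleast] := accel_lub hg hlt hacc.
have hdef n : exists z, run (wpow g n) x = Some z.
  by case: (run_wpow_step le_po act_pc hg (proj1 hlt) n) => z [_ [hz _]]; exists z.
pose Dq (pz : st P) := exists i, run (wpow g i) x = Some pz.1 /\ qf i = qs /\ pz.2 = qs.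
have hDq : directed (@le P) Dq.
  split; first by case: (hqs 0) => i [_ hi]; case: (hdef i) => z hz; exists (z, qs), i.
  move=> [z1 r1] [z2 r2] [i1 [h1 [_ /= ->]]] [i2 [h2 [_ /= ->]]].
  case: (hqs (maxn i1 i2)) => i [hi hqi]; case: (hdef i) => z hz.
  exists (z, qs); split; first by exists i.
  have hle := run_wpow_le le_po act_pc hg (proj1 hlt).
  split; split => //=; first exact: hle (leq_trans (leq_maxl i1 i2) hi) h1 hz.
  exact: hle (leq_trans (leq_maxr i1 i2) hi) h2 hz.
have hlub : is_lub (@le P) Dq (y, qs).
  apply: is_lub_sync; [by case: hDq | by move=> d [i [_ []]] |].
  split=> [_ [[z r] [[i [hi _]] <-]]|u hu]; first by apply: hub; exists i.
  apply: hleast => z [n hz]; case: (hqs n) => i [hni hqi]; case: (hdef i) => z' hz'.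
  apply: (po_trans le_po (run_wpow_le le_po act_pc hg (proj1 hlt) hni hz hz')).
  by apply: hu; exists (z', qs); split => //; exists i.
apply: (scott_closed_lub (scott_closed_cl _ _) hDq hlub) => -[z r] [i [hz [hqi /= ->]]].
by rewrite -hqi; apply: (cl_sync_run hC hz (hqf i)).
Qed.

Variable ws : seq (seq (lab T)).
Hypothesis drun_q0 : forall u, drun delta u q0 <> None <-> exists v, in_lang ws (u ++ v).

Lemma accel_path_cl_sync p c : accel_path p c -> forall pre post, ws = pre ++ p ++ post ->
  exists q u, C (c, q) /\ in_lang p u /\ drun delta u q0 = Some q.
Proof.
elim=> [|{}p g x y hp IH hacc] pre post hws.
  by exists q0, [::]; split; [apply: subset_cl; apply: (cover_refl (sync_po _ _)) | split].
case: (IH pre (g :: post)); first by rewrite hws -cats1 -!catA.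
move=> q [u [hC [hin hdu]]].
have hlang n : in_lang (rcons p g) (u ++ wpow g n) by apply: in_lang_rcons.
have hdr n : exists qn, drun delta (wpow g n) q = Some qn.
  have : drun delta (u ++ wpow g n) q0 <> None.
    apply/drun_q0; exists [::]; rewrite hws; apply: in_lang_catl.
    exact: in_lang_cat (hlang n) (in_lang_nil _).
  by rewrite drun_cat hdu; case: (drun _ _ q) => [qn|] // _; exists qn.
case: (choice _ hdr) => qf hqf.
have hwit n : drun delta (u ++ wpow g n) q0 = Some (qf n) by rewrite drun_cat hdu hqf.
have [gx [hg _]] := hacc.
case: (classic (lt (@le T) x gx)) => hlt.
  case: (pigeonhole_infinite qf) => qs hqs; case: (hqs 0) => i [_ hqi].
  exists qs, (u ++ wpow g i); split; first exact: cl_sync_accel hC hg hlt hacc hqf hqs.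
  by split; [apply: hlang | rewrite hwit hqi].
exists (qf 1), (u ++ wpow g 1); split; last by split; [apply: hlang | apply: hwit].
by rewrite (accel_not_lt hg hlt hacc); apply: (cl_sync_run hC _ (hqf 1)); rewrite /= cats0.
Qed.

End TerminationFlattening.

Theorem clover_terminates_strongly (T : TS) (s0 : st T) :
  complete_ts T -> infty_effective T -> clover_terminates s0 -> strongly_clover_flattable s0.
Proof.
move=> hT [_ [_ [_ [acc acc_spec]]]] hterm.
have [le_po [_ [_ act_pc]]] := hT.
case: (clover_terminates_stop acc_spec hterm) => M hstop.
case: (clover_set_accel_paths M (schedule_accel s0 acc_spec)) => ws hws.
exists {set position ws}, (@positions_delta _ ws), (initial_positions ws).
split; first by exists ws => u; apply: drun_positions_delta_prefix.
move=> x; split; last exact: cl_sync_fst_cl_cover.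
apply: cl_least; first exact: scott_closed_cl.
move=> c [y0 [z [hy0 [[u hu] hcz]]]].
have hdown := clover_stop_post_closed le_po act_pc hstop.
case: (post_closed_run hdown (ex_intro _ s0 (conj (or_introl erefl) hy0)) hu) => a [ha hza].
case: (hws a ha) => p [pre [post [hw hp]]].
case: (accel_path_cl_sync hT (drun_positions_delta_prefix ws) hp hw) => q [_ [hC _]].
apply: (scott_closed_down (scott_closed_cl _ _) _ (po_trans le_po hcz hza)).
by apply: subset_cl; exists (a, q).
Qed.

Theorem theorem5p21 (T : TS) (s0 : st T) :
  complete_ts T -> infty_effective T ->
  (clover_flattable s0 <-> weakly_clover_flattable s0) /\
  (weakly_clover_flattable s0 <-> strongly_clover_flattable s0) /\
  (strongly_clover_flattable s0 <-> clover_terminates s0).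
Proof.
move=> hT heff; have le_po : partial_order (@le T) by case: hT.
have h12 := @clover_flattable_weakly T s0 le_po.
have h24 := @weakly_clover_flattable_terminates T s0 hT.
have h43 := @clover_terminates_strongly T s0 hT heff.
have h31 := @strongly_clover_flattable_flattable T s0 hT.
split; first by split=> [/h12|/h24/h43/h31].
split; first by split=> [/h24/h43|/h31/h12].
by split=> [/h31/h12/h24|/h43].
Qed.
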